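(* Let $\alpha\in(0,1)$ be irrational with denominators $(q_n)$, and let $M_n=\lfloor (q_n-1)/2\rfloor$. Then $$P_{q_n}(\alpha)=\Theta\left(c_n\exp\Big(-2c_n\sum_{t=1}^{M_n-1}\frac{D_t(\alpha_n^-)}{t(t+1)}\Big)\right)\quad\text{as } n\to\infty.$$ That is, there are constants $0<c\le C$, independent of $n$, such that for all sufficiently large $n$ the quantity $P_{q_n}(\alpha)$ lies between $c$ and $C$ times the expression inside $\Theta$.
   Context: For real $\alpha$ and $N\in\mathbb N$ let $P_N(\alpha)=\prod_{r=1}^N|2\sin(\pi r\alpha)|$. Write $\alpha=[0;a_1,a_2,\ldots]$. Its convergents $p_n/q_n$ are indexed by $q_0=0$, $q_1=1$, $q_{n+1}=a_nq_n+q_{n-1}$ and $p_0=1$, $p_1=0$, $p_{n+1}=a_np_n+p_{n-1}$. Define $\alpha_n^+=[a_n;a_{n+1},a_{n+2},\ldots]$ and $\alpha_n^-=[0;a_{n-1},a_{n-2},\ldots,a_1]$; one has $\alpha_n^-=q_{n-1}/q_n$. Define $c_n=1/(\alpha_n^++\alpha_n^-)$. For real $\beta$ and $t\in\mathbb N$ let $D_t(\beta)=\sum_{s=1}^t\left(\{\beta s\}-\tfrac12\right)$, where $\{x\}$ denotes the fractional part of $x$. *)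

From Stdlib Require Import Reals ZArith.
Open Scope R_scope.

Fixpoint prod1 (f : nat -> R) (N : nat) : R :=
  match N with O => 1 | S m => prod1 f m * f (S m) end.
Fixpoint sum1 (f : nat -> R) (N : nat) : R :=
  match N with O => 0 | S m => sum1 f m + f (S m) end.

Definition P (N : nat) (alpha : R) : R :=
  prod1 (fun r => Rabs (2 * sin (PI * INR r * alpha))) N.

(* fractional part {x} = x - floor x  (Stdlib: Int_part = floor) *)
Definition frac (x : R) : R := frac_part x.

Definition D (t : nat) (beta : R) : R :=
  sum1 (fun s => frac (beta * INR s) - / 2) t.

Definition irrational (x : R) : Prop :=
  ~ exists (p q : Z), q <> 0%Z /\ x = IZR p / IZR q.

(* Gauss map iterates: gx alpha k = x_{k+1}, with x_1 = alpha and
   x_{k+1} = {1/x_k}; so x_n = [0; a_n, a_{n+1}, ...]. *)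
Fixpoint gx (alpha : R) (k : nat) : R :=
  match k with O => alpha | S m => frac (/ gx alpha m) end.

(* partial quotients a_n = floor(1/x_n), n >= 1 (a_0 unused, set to 0) *)
Definition a (alpha : R) (n : nat) : nat :=
  match n with O => O | S m => Z.to_nat (Int_part (/ gx alpha m)) end.

(* qpair n = (q_n, q_{n+1}); q_0 = 0, q_1 = 1, q_{n+1} = a_n q_n + q_{n-1} *)
Fixpoint qpair (alpha : R) (n : nat) : nat * nat :=
  match n with
  | O => (0%nat, 1%nat)
  | S m => let (u, v) := qpair alpha m in (v, (a alpha (S m) * v + u)%nat)
  end.
Definition q (alpha : R) (n : nat) : nat := fst (qpair alpha n).

(* alpha_n^+ = [a_n; a_{n+1}, ...] = 1 / x_n  (n >= 1) *)
Definition alpha_plus (alpha : R) (n : nat) : R := / gx alpha (n - 1).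
Definition alpha_minus (alpha : R) (n : nat) : R :=
  INR (q alpha (n - 1)) / INR (q alpha n).
Definition c (alpha : R) (n : nat) : R :=
  / (alpha_plus alpha n + alpha_minus alpha n).

Definition M (alpha : R) (n : nat) : nat := ((q alpha n - 1) / 2)%nat.

Definition theta_expr (alpha : R) (n : nat) : R :=
  c alpha n * exp (- 2 * c alpha n *
    sum1 (fun t => D t (alpha_minus alpha n) / (INR t * INR (t + 1)))
         (M alpha n - 1)).

(* Write Q = q_n and Q' = q_(n-1).  Consecutive convergents have determinant e = +-1, which
   gives alpha Q = p_n + e c_n / Q and makes k |-> k Q' mod Q a permutation of 1, ..., Q - 1.
   The factor r = Q of P_Q(alpha) is therefore 2 sin (pi c_n / Q), and after reindexing the
   factors r < Q by the permutation, the k-th one is 2 sin (y_k + h_k) with y_k = pi k / Q and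
   h_k = - pi c_n {k Q' / Q} / Q.  As the 2 sin y_k multiply to Q (roots of unity),
     ln P_Q(alpha) = ln (2 Q sin (pi c_n / Q)) + sum_k ln (sin (y_k + h_k) / sin y_k),
   and the first term is ln c_n + O(1).  Each logarithm is h_k cot y_k up to
   O(1/k^2 + 1/(Q-k)^2 + 1/Q^2), and (pi/Q) cot y_k = 1/k - 1/(Q-k) + O(1/Q).  The symmetry
   {(Q-k) Q'/Q} = 1 - {k Q'/Q} turns the main term into -2 c_n sum_(k<Q) ({k alpha_n^-} - 1/2)/k,
   which summation by parts identifies with -2 c_n sum_(t<M_n) D_t(alpha_n^-)/(t(t+1)) up to
   O(1).  All error terms are absolute constants, so ln P_(q_n)(alpha) - ln theta_n is bounded. *)

From Pilot Require Import Defs.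
From Stdlib Require Import Reals ZArith Lra Lia List Permutation.
From mathcomp Require ssreflect ssrfun ssrbool eqtype ssrnat div fintype bigop ssralg ssrnum poly complex Rstruct.
Open Scope R_scope.

Lemma PI_bounds : 3 <= PI <= 4.
Proof. split; [| apply PI_4]. pose proof PI2_3_2. lra. Qed.

Lemma Rabs_le_inv x r : Rabs x <= r -> - r <= x <= r.
Proof. unfold Rabs; destruct (Rcase_abs x); lra. Qed.

Lemma exp_le_compat x y : x <= y -> exp x <= exp y.
Proof. intros [Hlt | ->]; [left; apply exp_increasing; exact Hlt | right; reflexivity]. Qed.

Lemma INR_ge1 k : (1 <= k)%nat -> 1 <= INR k.
Proof. intros Hk. apply (le_INR 1); exact Hk. Qed.

Lemma pi_mul_div_range k Q : (1 <= k <= Q - 1)%nat -> 0 < PI * INR k / INR Q < PI.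
Proof.
  intros Hk. pose proof PI_RGT_0. pose proof (INR_ge1 k ltac:(lia)).
  assert (INR k < INR Q) by (apply lt_INR; lia).
  split; [apply Rdiv_lt_0_compat; nra|].
  apply Rmult_lt_reg_r with (INR Q); [lra|].
  replace (PI * INR k / INR Q * INR Q) with (PI * INR k) by (field; lra). nra.
Qed.

Lemma sin_pi_div_pos k Q : (0 < k < Q)%nat -> 0 < sin (PI * INR k / INR Q).
Proof. intros Hk. apply sin_gt_0; apply pi_mul_div_range; lia. Qed.

Lemma abs_sin_add_int_mul_PI w m : Rabs (sin (w + IZR m * PI)) = Rabs (sin w).
Proof.
  assert (Hsin : sin (IZR m * PI) = 0) by (apply sin_eq_0_1; exists m; reflexivity).
  assert (Hcos : Rabs (cos (IZR m * PI)) = 1).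
  { pose proof (sin2_cos2 (IZR m * PI)) as H. rewrite Hsin in H. unfold Rsqr in H.
    pose proof (Rabs_pos (cos (IZR m * PI))).
    assert (Rabs (cos (IZR m * PI)) * Rabs (cos (IZR m * PI)) = 1)
      by (rewrite <- Rabs_mult, <- Rabs_R1; f_equal; lra).
    nra. }
  rewrite sin_plus, Hsin, Rmult_0_r, Rplus_0_r, Rabs_mult, Hcos. ring.
Qed.

Lemma abs_sin_sign_mul s z : s = 1 \/ s = -1 -> Rabs (sin (s * z)) = Rabs (sin z).
Proof.
  intros [-> | ->]; [now rewrite Rmult_1_l|].
  replace (-1 * z) with (- z) by ring. now rewrite sin_neg, Rabs_Ropp.
Qed.

Lemma frac_div_nat m b : (0 < b)%nat -> frac (INR m / INR b) = INR (m mod b) / INR b.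
Proof.
  intros Hb. unfold frac, frac_part.
  assert (Hb' : 0 < INR b) by (apply lt_0_INR; lia).
  assert (Hmod : 0 <= INR (m mod b) < INR b).
  { split; [apply pos_INR | apply lt_INR, Nat.mod_upper_bound; lia]. }
  assert (Hm : INR m / INR b = IZR (Z.of_nat (m / b)) + INR (m mod b) / INR b).
  { rewrite <- INR_IZR_INZ. rewrite (Nat.div_mod_eq m b) at 1.
    rewrite plus_INR, mult_INR. field. lra. }
  assert (Hfloor : Int_part (INR m / INR b) = Z.of_nat (m / b)).
  { unfold Int_part.
    assert (Hup : up (INR m / INR b) = (Z.of_nat (m / b) + 1)%Z).
    { assert (0 <= INR (m mod b) / INR b)
        by (apply Rmult_le_pos; [lra | left; apply Rinv_0_lt_compat; lra]).
      assert (INR (m mod b) / INR b < 1).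
      { apply Rmult_lt_reg_r with (INR b); [lra|].
        replace (INR (m mod b) / INR b * INR b) with (INR (m mod b)) by (field; lra). lra. }
      symmetry. apply tech_up; rewrite ?plus_IZR, Hm; simpl; lra. }
    rewrite Hup. ring. }
  rewrite Hfloor, Hm. ring.
Qed.

(** * The product of the 2 sin (pi k / Q) *)

Module RootsOfUnity.
Import ssreflect ssrfun ssrbool eqtype ssrnat div fintype bigop ssralg ssrnum poly complex Rstruct.
Import GRing.Theory Num.Theory.
Local Open Scope ring_scope.
Local Open Scope complex_scope.

Definition expi (t : R) : R[i] := Complex (cos t) (sin t).

Lemma expiD s t : expi s * expi t = expi (Rplus s t).
Proof.
rewrite /expi /GRing.mul /= cos_plus sin_plus.
by congr Complex; rewrite -?RplusE -?RmultE -?RminusE; lra.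
Qed.

Lemma expiMn t k : expi t ^+ k = expi (Rmult (INR k) t).
Proof.
elim: k => [|k IH]; first by rewrite expr0 /= Rmult_0_l /expi cos_0 sin_0.
by rewrite exprS IH expiD S_INR; congr expi; rewrite -?RplusE -?RmultE; lra.
Qed.

Section PrimitiveRoot.
Variable Q : nat.
Hypothesis Q_gt0 : (0 < Q)%N.
Let z := expi (Rdiv (Rmult (IZR 2) PI) (INR Q)).

Let expi_angle k : z ^+ k = expi (Rmult (IZR 2) (Rdiv (Rmult PI (INR k)) (INR Q))).
Proof.
have Q_pos : Rlt 0 (INR Q) by apply: lt_0_INR; apply/ltP.
by rewrite /z expiMn; congr expi; field; lra.
Qed.

Lemma root_of_unity_primitive : Q.-primitive_root z.
Proof.
have zQ : z ^+ Q = 1.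
  rewrite expi_angle.
  have -> : Rmult (IZR 2) (Rdiv (Rmult PI (INR Q)) (INR Q)) = Rmult (IZR 2) PI.
    have Q_pos : Rlt 0 (INR Q) by apply: lt_0_INR; apply/ltP.
    by field; lra.
  by rewrite /expi cos_2PI sin_2PI.
have [m prim_m m_dvd_Q] := prim_order_exists Q_gt0 zQ.
have m_gt0 := prim_order_gt0 prim_m.
suff -> : Q = m by [].
apply/eqP; rewrite eqn_leq (dvdn_leq Q_gt0 m_dvd_Q) andbT leqNgt.
apply/negP => mQ.
have := prim_expr_order prim_m; rewrite expi_angle => - [cos_1 _].
have := sin_pi_div_pos m Q (conj (elimT ltP m_gt0) (elimT ltP mQ)).
rewrite cos_2a_sin -R1E in cos_1; nra.
Qed.

Lemma prod_one_sub_root : \prod_(1 <= i < Q) (1 - z ^+ i) = Q%:R.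
Proof.
have F := factor_Xn_sub_1 root_of_unity_primitive.
rewrite big_ltn // expr0 polyC1 subrX1 in F.
have X_sub1_neq0 : ('X - 1 : {poly R[i]}) != 0 by rewrite -polyC1 polyXsubC_eq0.
have := congr1 (fun p => p.[1]) (mulfI X_sub1_neq0 F).
rewrite /= horner_prod horner_sum.
under eq_bigr do rewrite hornerXsubC.
under [X in _ = X -> _]eq_bigr do rewrite hornerXn expr1n.
move=> ->; rewrite big_const_ord -[in RHS](card_ord Q) -sumr_const.
by rewrite big_const_ord.
Qed.

Lemma normc_one_sub_root i : (0 < i < Q)%N ->
  Normc.normc (1 - z ^+ i) = Rmult (IZR 2) (sin (Rdiv (Rmult PI (INR i)) (INR Q))).
Proof.
move=> /andP [i_gt0 i_ltQ].
set y := Rdiv (Rmult PI (INR i)) (INR Q).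
have sin_y_gt0 : Rlt 0 (sin y) by apply: sin_pi_div_pos; split; apply/ltP.
rewrite expi_angle -/y /expi /GRing.add /GRing.opp /= /Normc.normc.
match goal with |- context [Num.sqrt ?a] =>
  have -> : a = (Rmult (IZR 2) (sin y)) ^+ 2 end.
  rewrite -!RpowE -?RminusE -?RplusE -?RmultE -R1E -R0E cos_2a_sin sin_2a.
  by have := sin2_cos2 y; rewrite /Rsqr => h; nra.
by rewrite sqrtr_sqr ger0_norm //; apply/RleP; rewrite -R0E; lra.
Qed.

Lemma prod_two_sin :
  \prod_(1 <= i < Q) Rmult (IZR 2) (sin (Rdiv (Rmult PI (INR i)) (INR Q))) = Q%:R.
Proof.
have := congr1 (@Normc.normc _) prod_one_sub_root.
rewrite (big_morph (@Normc.normc _) (@Normc.normcM _) (@Normc.normc1 _)).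
rewrite normcMn Normc.normc1 => <-.
by rewrite !big_nat; apply: eq_bigr => i Hi; rewrite normc_one_sub_root.
Qed.

End PrimitiveRoot.

Lemma prod1_big f n : prod1 f n = \prod_(1 <= i < n.+1) f i.
Proof.
elim: n => [|n IH]; first by rewrite big_geq.
by rewrite big_nat_recr // -IH.
Qed.

Lemma prod1_two_sin_pi_div (Q : nat) : Peano.le 1 Q ->
  prod1 (fun k => Rmult (IZR 2) (sin (Rdiv (Rmult PI (INR k)) (INR Q)))) (Nat.sub Q 1) = INR Q.
Proof.
move=> /leP Q_gt0; change (Nat.sub Q 1) with (Q - 1)%N.
by rewrite prod1_big subn1 prednK // [RHS]INRE prod_two_sin.
Qed.

End RootsOfUnity.

Lemma sum1_ext f g N :
  (forall k, (1 <= k <= N)%nat -> f k = g k) -> sum1 f N = sum1 g N.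
Proof.
  induction N; intros H; simpl; auto.
  rewrite IHN, H; [reflexivity | lia | intros; apply H; lia].
Qed.

Lemma prod1_ext f g N :
  (forall k, (1 <= k <= N)%nat -> f k = g k) -> prod1 f N = prod1 g N.
Proof.
  induction N; intros H; simpl; auto.
  rewrite IHN, H; [reflexivity | lia | intros; apply H; lia].
Qed.

Lemma sum1_add f g N : sum1 (fun k => f k + g k) N = sum1 f N + sum1 g N.
Proof. induction N; simpl; lra. Qed.

Lemma sum1_sub f g N : sum1 (fun k => f k - g k) N = sum1 f N - sum1 g N.
Proof. induction N; simpl; lra. Qed.

Lemma sum1_opp f N : sum1 (fun k => - f k) N = - sum1 f N.
Proof. induction N; simpl; lra. Qed.

Lemma sum1_scal a f N : sum1 (fun k => a * f k) N = a * sum1 f N.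
Proof. induction N; simpl; lra. Qed.

Lemma sum1_const a N : sum1 (fun _ => a) N = INR N * a.
Proof. induction N; simpl sum1; [simpl; lra | rewrite IHN, S_INR; lra]. Qed.

Lemma sum1_abs_le f g N :
  (forall k, (1 <= k <= N)%nat -> Rabs (f k) <= g k) -> Rabs (sum1 f N) <= sum1 g N.
Proof.
  induction N; intros H; simpl; [rewrite Rabs_R0; lra|].
  eapply Rle_trans; [apply Rabs_triang|].
  assert (Rabs (sum1 f N) <= sum1 g N) by (apply IHN; intros; apply H; lia).
  assert (Rabs (f (S N)) <= g (S N)) by (apply H; lia). lra.
Qed.

Lemma sum1_split f m N :
  sum1 f (m + N) = sum1 f m + sum1 (fun t => f (m + t)%nat) N.
Proof.
  induction N; simpl; [rewrite Nat.add_0_r; lra|].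
  rewrite Nat.add_succ_r; simpl; rewrite IHN; lra.
Qed.

Lemma prod1_pos f N : (forall k, (1 <= k <= N)%nat -> 0 < f k) -> 0 < prod1 f N.
Proof.
  induction N; intros H; simpl; [lra|].
  apply Rmult_lt_0_compat; [apply IHN; intros; apply H; lia | apply H; lia].
Qed.

Lemma ln_prod1 f N : (forall k, (1 <= k <= N)%nat -> 0 < f k) ->
  ln (prod1 f N) = sum1 (fun k => ln (f k)) N.
Proof.
  induction N; intros H; simpl; [apply ln_1|].
  rewrite ln_mult, IHN; auto; [intros; apply H; lia | | apply H; lia].
  apply prod1_pos; intros; apply H; lia.
Qed.

Lemma fold_left_perm (op : R -> R -> R) :
  (forall a x y, op (op a x) y = op (op a y) x) ->
  forall l1 l2, Permutation l1 l2 -> forall a, fold_left op l1 a = fold_left op l2 a.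
Proof.
  intros op_right_comm l1 l2 Hl. induction Hl; intros a; simpl.
  - reflexivity.
  - apply IHHl.
  - now rewrite op_right_comm.
  - now rewrite IHHl1, IHHl2.
Qed.

Lemma sum1_fold_left f N : sum1 f N = fold_left Rplus (map f (seq 1 N)) 0.
Proof.
  induction N; [reflexivity|].
  rewrite seq_S, map_app, fold_left_app; simpl. now rewrite IHN.
Qed.

Lemma prod1_fold_left f N : prod1 f N = fold_left Rmult (map f (seq 1 N)) 1.
Proof.
  induction N; [reflexivity|].
  rewrite seq_S, map_app, fold_left_app; simpl. now rewrite IHN.
Qed.

Section Reindex.
Variables (h : nat -> nat) (N : nat).
Hypothesis h_range : forall k, (1 <= k <= N)%nat -> (1 <= h k <= N)%nat.
Hypothesis h_inj : forall k1 k2, (1 <= k1 <= N)%nat -> (1 <= k2 <= N)%nat ->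
  h k1 = h k2 -> k1 = k2.

Lemma Permutation_map_seq : Permutation (map h (seq 1 N)) (seq 1 N).
Proof.
  apply NoDup_Permutation_bis.
  - apply FinFun.Injective_map_NoDup_in; [|apply seq_NoDup].
    intros x y Hx Hy. apply in_seq in Hx, Hy. apply h_inj; lia.
  - rewrite length_map; lia.
  - intros x Hx. apply in_map_iff in Hx. destruct Hx as [k [<- Hk]].
    apply in_seq in Hk. apply in_seq. specialize (h_range k). lia.
Qed.

Lemma sum1_reindex f : sum1 (fun k => f (h k)) N = sum1 f N.
Proof.
  rewrite !sum1_fold_left, <- (map_map h f).
  apply fold_left_perm, Permutation_map, Permutation_map_seq. intros; ring.
Qed.

Lemma prod1_reindex f : prod1 (fun k => f (h k)) N = prod1 f N.
Proof.
  rewrite !prod1_fold_left, <- (map_map h f).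
  apply fold_left_perm, Permutation_map, Permutation_map_seq. intros; ring.
Qed.

End Reindex.

Lemma sum1_compl f Q : sum1 (fun k => f (Q - k)%nat) (Q - 1) = sum1 f (Q - 1).
Proof. apply (sum1_reindex (fun k => Q - k)%nat); intros; lia. Qed.

(** * Continued fractions *)

Fixpoint ppair (alpha : R) (n : nat) : nat * nat :=
  match n with
  | O => (1%nat, 0%nat)
  | S m => let (u, v) := ppair alpha m in (v, (a alpha (S m) * v + u)%nat)
  end.
Definition p (alpha : R) (n : nat) : nat := fst (ppair alpha n).

Section ContinuedFraction.
Variable alpha : R.
Notation x := (gx alpha).
Notation a := (a alpha).
Notation q := (q alpha).
Notation p := (p alpha).

Lemma q_rec m : q (S (S m)) = (a (S m) * q (S m) + q m)%nat.
Proof.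
  unfold Defs.q. simpl qpair. destruct (qpair alpha m). reflexivity.
Qed.

Lemma p_rec m : p (S (S m)) = (a (S m) * p (S m) + p m)%nat.
Proof.
  change (fst (ppair alpha (S (S m)))
    = (a (S m) * fst (ppair alpha (S m)) + fst (ppair alpha m))%nat).
  simpl ppair. destruct (ppair alpha m). reflexivity.
Qed.

Lemma q_p_det m :
  (Z.of_nat (q (S m)) * Z.of_nat (p m) - Z.of_nat (p (S m)) * Z.of_nat (q m) = 1
   \/ Z.of_nat (q (S m)) * Z.of_nat (p m) - Z.of_nat (p (S m)) * Z.of_nat (q m) = -1)%Z.
Proof.
  induction m as [|m IH]; [left; reflexivity|].
  rewrite q_rec, p_rec, !Nat2Z.inj_add, !Nat2Z.inj_mul. lia.
Qed.

Lemma gauss_step j : 0 < x j < 1 ->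
  x (S j) = / x j - INR (a (S j)) /\ (1 <= a (S j))%nat.
Proof.
  intros [x_pos x_lt1].
  assert (inv_ge1 : 1 <= / x j) by (rewrite <- Rinv_1; apply Rinv_le_contravar; lra).
  assert (floor_ge1 : (1 <= Int_part (/ x j))%Z).
  { destruct (base_Int_part (/ x j)).
    assert (0 < Int_part (/ x j))%Z by (apply lt_IZR; lra). lia. }
  unfold Defs.a. simpl gx. unfold frac, frac_part.
  rewrite INR_IZR_INZ, Z2Nat.id by lia. split; [reflexivity | lia].
Qed.

Lemma q_pos m : (forall i, (i < m)%nat -> (1 <= a (S i))%nat) -> (1 <= q (S m))%nat.
Proof.
  induction m as [|m IH]; intros Ha; [reflexivity|].
  rewrite q_rec. pose proof (Ha m ltac:(lia)).
  assert (1 <= q (S m))%nat by (apply IH; intros; apply Ha; lia). nia.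
Qed.

Lemma alpha_convergents j : (forall i, (i < j)%nat -> 0 < x i < 1) ->
  alpha * (INR (q (S j)) + INR (q j) * x j) = INR (p (S j)) + INR (p j) * x j.
Proof.
  induction j as [|j IH]; intros Hx; [simpl; lra|].
  assert (Hj : 0 < x j < 1) by (apply Hx; lia).
  destruct (gauss_step j Hj) as [x_succ _].
  rewrite q_rec, p_rec, !plus_INR, !mult_INR, x_succ.
  assert (IHj := IH (fun i Hi => Hx i ltac:(lia))).
  set (A := INR (a (S j))) in *.
  apply Rmult_eq_reg_r with (x j); [|lra].
  replace (alpha * (A * INR (q (S j)) + INR (q j) + INR (q (S j)) * (/ x j - A)) * x j)
    with (alpha * (INR (q (S j)) + INR (q j) * x j)) by (field; lra).
  rewrite IHj. field. lra.
Qed.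

Lemma gauss_iter_in_unit : 0 < alpha < 1 -> irrational alpha -> forall j, 0 < x j < 1.
Proof.
  intros alpha_unit alpha_irr.
  enough (H : forall j i, (i <= j)%nat -> 0 < x i < 1) by (intros j; apply (H j); lia).
  induction j as [|j IH]; intros i Hi.
  - replace i with 0%nat by lia. exact alpha_unit.
  - destruct (Nat.eq_dec i (S j)) as [->|Hne]; [|apply IH; lia].
    assert (x_frac : 0 <= x (S j) < 1).
    { destruct (base_fp (/ x j)). simpl gx. unfold frac. split; lra. }
    destruct (Req_dec (x (S j)) 0) as [x_zero|]; [|lra].
    exfalso. apply alpha_irr.
    assert (F := alpha_convergents (S j) (fun i Hi0 => IH i ltac:(lia))).
    rewrite x_zero in F.
    assert (Hq : (1 <= q (S (S j)))%nat).
    { apply q_pos. intros i0 Hi0. apply gauss_step, IH. lia. }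
    exists (Z.of_nat (p (S (S j)))), (Z.of_nat (q (S (S j)))). split; [lia|].
    rewrite <- !INR_IZR_INZ. apply le_INR in Hq. simpl in Hq.
    apply Rmult_eq_reg_r with (INR (q (S (S j)))); [|lra].
    field_simplify; lra.
Qed.

End ContinuedFraction.

(** * Multiplication by q_(n-1) modulo q_n *)

Section MulMod.
Variables Q Q' : nat.
Hypothesis Q'_range : (1 <= Q' < Q)%nat.

Definition mulmod (k : nat) : nat := ((k * Q') mod Q)%nat.

Lemma mulmod_1 : mulmod 1 = Q'.
Proof. unfold mulmod. rewrite Nat.mul_1_l. apply Nat.mod_small. lia. Qed.

Let mulmod_div k : exists t : Z,
  (Z.of_nat (mulmod k) = Z.of_nat k * Z.of_nat Q' - Z.of_nat Q * t)%Z.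
Proof.
  exists (Z.of_nat (k * Q' / Q)). unfold mulmod.
  pose proof (Nat.div_mod_eq (k * Q') Q) as Hdiv.
  apply (f_equal Z.of_nat) in Hdiv. rewrite Nat2Z.inj_add, !Nat2Z.inj_mul in Hdiv. lia.
Qed.

Variables Pn Pn' : nat.
Let e := (Z.of_nat Q * Z.of_nat Pn' - Z.of_nat Pn * Z.of_nat Q')%Z.
Hypothesis e_unit : e = 1%Z \/ e = (-1)%Z.

Lemma mulmod_mul_num k :
  exists m : Z, (Z.of_nat (mulmod k) * Z.of_nat Pn = Z.of_nat Q * m - e * Z.of_nat k)%Z.
Proof.
  destruct (mulmod_div k) as [t Ht].
  exists (Z.of_nat k * Z.of_nat Pn' - Z.of_nat Pn * t)%Z.
  rewrite Ht. unfold e. ring.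
Qed.

Let e_mul_small_multiple (d m : Z) :
  (- Z.of_nat Q < d < Z.of_nat Q)%Z -> (e * d = Z.of_nat Q * m)%Z -> d = 0%Z.
Proof.
  intros Hd Heq.
  destruct (Z.lt_trichotomy m 0) as [|[->|]]; destruct e_unit as [He|He];
    rewrite He in Heq; nia.
Qed.

Lemma mulmod_range k : (1 <= k <= Q - 1)%nat -> (1 <= mulmod k <= Q - 1)%nat.
Proof.
  intros Hk.
  assert (mulmod k < Q)%nat by (apply Nat.mod_upper_bound; lia).
  destruct (mulmod_mul_num k) as [m Hm].
  assert (mulmod k <> 0%nat); [|lia].
  intros Hzero. rewrite Hzero in Hm.
  assert (Z.of_nat k = 0%Z); [|lia].
  apply (e_mul_small_multiple _ m); lia.
Qed.

Lemma mulmod_inj k1 k2 : (1 <= k1 <= Q - 1)%nat -> (1 <= k2 <= Q - 1)%nat ->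
  mulmod k1 = mulmod k2 -> k1 = k2.
Proof.
  intros H1 H2 Heq.
  destruct (mulmod_mul_num k1) as [m1 Hm1], (mulmod_mul_num k2) as [m2 Hm2].
  rewrite Heq in Hm1.
  assert (Z.of_nat k1 - Z.of_nat k2 = 0)%Z; [|lia].
  apply (e_mul_small_multiple _ (m1 - m2)); lia.
Qed.

Lemma mulmod_compl k : (1 <= k <= Q - 1)%nat -> mulmod (Q - k) = (Q - mulmod k)%nat.
Proof.
  intros Hk.
  pose proof (mulmod_range k Hk). pose proof (mulmod_range (Q - k) ltac:(lia)).
  destruct (mulmod_div k) as [t1 Ht1], (mulmod_div (Q - k)) as [t2 Ht2].
  rewrite Nat2Z.inj_sub in Ht2 by lia.
  assert (Z.of_nat (mulmod k) + Z.of_nat (mulmod (Q - k))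
          = Z.of_nat Q * (Z.of_nat Q' - t1 - t2))%Z by lia.
  assert (Z.of_nat Q' - t1 - t2 = 1)%Z by nia.
  lia.
Qed.

End MulMod.

(** * Local estimates for sine, cotangent and logarithm *)

Lemma sin_ge_cubic t : 0 <= t <= PI -> t - t^3/6 <= sin t.
Proof.
  intros H. destruct (sin_bound t 0 (proj1 H) (proj2 H)) as [H1 _].
  unfold sin_approx, sin_term in H1. simpl in H1. lra.
Qed.

Lemma sin_le_id t : 0 <= t -> sin t <= t.
Proof.
  intros H. destruct (Req_dec t 0) as [->|]; [rewrite sin_0; lra|].
  left; apply sin_lt_x; lra.
Qed.

Lemma cos_quartic_bounds t : - PI / 2 <= t <= PI / 2 ->
  1 - t^2/2 <= cos t <= 1 - t^2/2 + t^4/24.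
Proof.
  intros H. destruct (cos_bound t 0 (proj1 H) (proj2 H)) as [H1 H2].
  unfold cos_approx, cos_term in H1, H2. simpl in H1, H2. lra.
Qed.

Lemma sin_ge_third t : 0 <= t <= 2 -> t / 3 <= sin t.
Proof.
  intros H. pose proof PI_bounds. pose proof (sin_ge_cubic t ltac:(lra)). nra.
Qed.

Lemma ln_bounds r : 0 < r -> 1 - / r <= ln r <= r - 1.
Proof.
  intros H. split.
  - pose proof (exp_ineq1_le (ln (/ r))) as E.
    rewrite exp_ln, ln_Rinv in E by (try apply Rinv_0_lt_compat; lra). lra.
  - pose proof (exp_ineq1_le (ln r)) as E. rewrite exp_ln in E by lra. lra.
Qed.

Lemma ln_near_one r : 1 / 2 <= r -> Rabs (ln r - (r - 1)) <= 2 * (r - 1)^2.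
Proof.
  intros Hr. destruct (ln_bounds r ltac:(lra)) as [Hlo Hhi].
  assert (r - 1 - (1 - / r) = (r - 1)^2 / r) by (field; lra).
  assert ((r - 1)^2 / r <= 2 * (r - 1)^2).
  { apply Rmult_le_reg_r with r; [lra|].
    replace ((r - 1)^2 / r * r) with ((r - 1)^2) by (field; lra).
    pose proof (pow2_ge_0 (r - 1)). nra. }
  apply Rabs_le. lra.
Qed.

Lemma cot_near_zero y : 0 < y <= PI / 2 -> 1 / y - 1 <= cos y / sin y <= 1 / y.
Proof.
  intros H. pose proof PI_bounds.
  pose proof (cos_quartic_bounds y ltac:(lra)) as [Hc1 Hc2].
  pose proof (sin_ge_cubic y ltac:(lra)). pose proof (sin_le_id y ltac:(lra)).
  assert (Hs : 0 < sin y) by (apply sin_gt_0; lra).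
  assert (Hcos : 0 <= cos y) by (apply cos_ge_0; lra).
  split; apply Rmult_le_reg_r with (y * sin y); try nra.
  - replace (cos y / sin y * (y * sin y)) with (y * cos y) by (field; lra).
    replace ((1 / y - 1) * (y * sin y)) with (sin y * (1 - y)) by (field; lra).
    destruct (Rle_dec 1 y); nra.
  - replace (cos y / sin y * (y * sin y)) with (y * cos y) by (field; lra).
    replace (1 / y * (y * sin y)) with (sin y) by (field; lra). nra.
Qed.

Lemma cot_approx y : 0 < y < PI -> Rabs (cos y / sin y - (1 / y - 1 / (PI - y))) <= 2.
Proof.
  intros H. pose proof PI_bounds.
  assert (inv_le1 : forall z, 1 <= z -> 0 < 1 / z <= 1).
  { intros z Hz. split; [apply Rdiv_lt_0_compat; lra|].
    unfold Rdiv. rewrite Rmult_1_l, <- Rinv_1. apply Rinv_le_contravar; lra. }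
  destruct (Rle_dec y (PI / 2)).
  - pose proof (cot_near_zero y ltac:(lra)).
    pose proof (inv_le1 (PI - y) ltac:(lra)). apply Rabs_le; lra.
  - pose proof (cot_near_zero (PI - y) ltac:(lra)).
    assert (Hc : cos y / sin y = - (cos (PI - y) / sin (PI - y))).
    { rewrite sin_PI_x, cos_minus, cos_PI, sin_PI. field.
      apply Rgt_not_eq, sin_gt_0; lra. }
    pose proof (inv_le1 y ltac:(lra)). rewrite Hc. apply Rabs_le; lra.
Qed.

Lemma sin_ge_half y h : 0 < y < PI -> y / 2 <= y + h <= y -> sin y / 2 <= sin (y + h).
Proof.
  intros H1 H2. pose proof PI_bounds.
  assert (Hs2 : sin y <= 2 * sin (y / 2)).
  { replace y with (2 * (y / 2)) at 1 by field. rewrite sin_2a.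
    assert (0 <= sin (y / 2)) by (apply sin_ge_0; lra).
    pose proof (COS_bound (y / 2)). nra. }
  destruct (Rle_dec (y + h) (PI / 2)).
  - assert (sin (y / 2) <= sin (y + h)) by (apply sin_incr_1; lra). lra.
  - assert (sin y <= sin (y + h)) by (apply sin_decr_1; lra).
    assert (0 <= sin y) by (apply sin_ge_0; lra). lra.
Qed.

Section SinRatio.
Variables y h d B : R.
Hypothesis y_range : 0 < y < PI.
Hypothesis h_range : - d <= h <= 0.
Hypothesis y_half_le : y / 2 <= y + h.
Hypothesis d_range : 0 <= d <= 3 / 2.
Hypothesis d_le : d <= B * sin y.
Hypothesis B_range : 0 <= B <= 6.

Let sin_pos : 0 < sin y.
Proof. apply sin_gt_0; lra. Qed.

Lemma h_cot_bound : Rabs (h * (cos y / sin y)) <= B.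
Proof.
  unfold Rdiv. rewrite Rabs_mult, Rabs_mult, Rabs_inv, (Rabs_pos_eq (sin y)) by lra.
  pose proof (Rabs_pos (cos y)). pose proof (COS_bound y).
  assert (Rabs (cos y) <= 1) by (apply Rabs_le; lra).
  assert (Rabs h <= d) by (apply Rabs_le; lra).
  apply Rmult_le_reg_r with (sin y); [lra|].
  rewrite Rmult_assoc, Rmult_assoc, Rinv_l, Rmult_1_r by lra.
  pose proof (Rabs_pos h). nra.
Qed.

Lemma sin_ratio_approx : Rabs (sin (y + h) / sin y - 1 - h * (cos y / sin y)) <= 3 / 2 * d^2.
Proof.
  set (t := - h). set (C := cos y / sin y).
  pose proof PI_bounds.
  assert (Hct : 1 - t^2/2 <= cos t <= 1).
  { pose proof (cos_quartic_bounds t ltac:(unfold t; lra)). pose proof (COS_bound t). lra. }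
  assert (Hst : t - t^3/6 <= sin t <= t).
  { split; [apply sin_ge_cubic | apply sin_le_id]; unfold t; lra. }
  assert (Hratio : sin (y + h) / sin y - 1 - h * C = (cos t - 1) + (t - sin t) * C).
  { replace (y + h) with (y - t) by (unfold t; ring).
    rewrite sin_minus. unfold C, t. field. lra. }
  pose proof h_cot_bound as HtC. fold C in HtC.
  replace (h * C) with (- (t * C)) in HtC by (unfold t; ring). rewrite Rabs_Ropp in HtC.
  assert (Hsc : Rabs ((t - sin t) * C) <= d^2).
  { rewrite Rabs_mult, (Rabs_pos_eq (t - sin t)) by lra.
    rewrite Rabs_mult, (Rabs_pos_eq t) in HtC by (unfold t; lra).
    pose proof (Rabs_pos C).
    assert (Ht : 0 <= t <= d) by (unfold t; lra).
    assert ((t - sin t) * Rabs C <= t^2 / 6 * (t * Rabs C)) by nra.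
    assert (t^2 / 6 * (t * Rabs C) <= d^2 / 6 * B) by (apply Rmult_le_compat; nra).
    nra. }
  rewrite Hratio. eapply Rle_trans; [apply Rabs_triang|].
  assert (Rabs (cos t - 1) <= d^2 / 2).
  { rewrite Rabs_left1 by lra. assert (t^2 <= d^2) by (unfold t; nra). lra. }
  lra.
Qed.

Lemma ln_sin_ratio_approx :
  Rabs (ln (sin (y + h) / sin y) - h * (cos y / sin y)) <= 4 * B^2 + 40 * d^2.
Proof.
  set (rho := sin (y + h) / sin y). set (C := cos y / sin y).
  assert (rho_ge : 1 / 2 <= rho).
  { pose proof (sin_ge_half y h y_range ltac:(lra)).
    unfold rho. apply Rmult_le_reg_r with (sin y); [lra|].
    replace (sin (y + h) / sin y * sin y) with (sin (y + h)) by (field; lra). lra. }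
  pose proof sin_ratio_approx as Happrox. fold rho C in Happrox.
  pose proof h_cot_bound as HhC. fold C in HhC.
  pose proof (ln_near_one rho rho_ge) as Hln.
  assert (Hrho1 : Rabs (rho - 1) <= B + 3 / 2 * d^2).
  { replace (rho - 1) with ((rho - 1 - h * C) + h * C) by ring.
    eapply Rle_trans; [apply Rabs_triang | lra]. }
  assert (Hsq : (rho - 1)^2 <= 2 * B^2 + 11 * d^2).
  { pose proof (Rabs_pos (rho - 1)).
    replace ((rho - 1)^2) with (Rabs (rho - 1) ^2) by (rewrite pow2_abs; ring).
    assert (Rabs (rho - 1) ^2 <= (B + 3 / 2 * d^2)^2) by (apply pow_incr; lra).
    pose proof (pow2_ge_0 (B - 3 / 2 * d^2)). pose proof (pow2_ge_0 d).
    assert (d^2 <= 9 / 4) by nra. nra. }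
  apply Rabs_le_inv in Happrox. apply Rabs_le_inv in Hln.
  apply Rabs_le. split; nra.
Qed.

End SinRatio.

(** * Sums over 1 <= k < Q *)

Lemma sum_inv_sq_le N : sum1 (fun k => / (INR k * INR k)) N <= 2 - 2 / (INR N + 1).
Proof.
  induction N as [|N IH]; [simpl; lra|].
  change (sum1 ?f (S N)) with (sum1 f N + f (S N)); cbv beta. rewrite S_INR.
  pose proof (pos_INR N).
  assert (2 / (INR N + 1) - 2 / (INR N + 1 + 1) - / ((INR N + 1) * (INR N + 1))
          = INR N / ((INR N + 1) * (INR N + 1) * (INR N + 2))) by (field; lra).
  assert (0 <= INR N / ((INR N + 1) * (INR N + 1) * (INR N + 2))).
  { apply Rmult_le_pos; [lra|]. left. apply Rinv_0_lt_compat.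
    apply Rmult_lt_0_compat; [nra|lra]. }
  lra.
Qed.

Lemma sum1_summation_by_parts g N : sum1 (fun k => g k / INR k) (S N) =
  sum1 g (S N) / INR (S N) + sum1 (fun t => sum1 g t / (INR t * INR (t + 1))) N.
Proof.
  induction N as [|N IH]; [simpl; field|].
  change (sum1 (fun k => g k / INR k) (S (S N)))
    with (sum1 (fun k => g k / INR k) (S N) + g (S (S N)) / INR (S (S N))).
  rewrite IH.
  change (sum1 g (S (S N))) with (sum1 g (S N) + g (S (S N))).
  change (sum1 (fun t => sum1 g t / (INR t * INR (t + 1))) (S N)) with
    (sum1 (fun t => sum1 g t / (INR t * INR (t + 1))) N
     + sum1 g (S N) / (INR (S N) * INR (S N + 1))).
  replace (S N + 1)%nat with (S (S N)) by lia.
  rewrite !S_INR. pose proof (pos_INR N). field. lra.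
Qed.

Lemma D_abs_le t beta : Rabs (D t beta) <= INR t / 2.
Proof.
  unfold D. eapply Rle_trans; [apply sum1_abs_le with (g := fun _ => / 2)|].
  - intros k _. unfold frac. destruct (base_fp (beta * INR k)). apply Rabs_le. lra.
  - rewrite sum1_const. lra.
Qed.

Lemma D_weight_abs_le t beta : (1 <= t)%nat ->
  Rabs (D t beta / (INR t * INR (t + 1))) <= / (2 * (INR t + 1)).
Proof.
  intros Ht. pose proof (INR_ge1 t Ht). pose proof (D_abs_le t beta).
  rewrite plus_INR; simpl (INR 1).
  unfold Rdiv. rewrite Rabs_mult, Rabs_inv, (Rabs_pos_eq (INR t * (INR t + 1))) by nra.
  apply Rmult_le_reg_r with (INR t * (INR t + 1)); [nra|].
  rewrite Rmult_assoc, Rinv_l by nra.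
  replace (/ (2 * (INR t + 1)) * (INR t * (INR t + 1))) with (INR t / 2) by (field; lra).
  lra.
Qed.

Section Truncation.
Variables (beta : R) (Q : nat).
Hypothesis Q_ge3 : (3 <= Q)%nat.
Let Mq := ((Q - 1) / 2)%nat.
Let w t := D t beta / (INR t * INR (t + 1)).

Let Mq_bounds : (1 <= Mq <= Q - 1)%nat /\ (Q - 1 - Mq <= Mq + 1)%nat.
Proof.
  pose proof (Nat.div_mod (Q - 1) 2 ltac:(lia)).
  pose proof (Nat.mod_upper_bound (Q - 1) 2 ltac:(lia)).
  unfold Mq. lia.
Qed.

Let tail_bound : Rabs (sum1 (fun t => w (Mq - 1 + t)%nat) (Q - 1 - Mq)) <= / 2.
Proof.
  destruct Mq_bounds as [HM1 HM2]. pose proof (INR_ge1 Mq ltac:(lia)).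
  eapply Rle_trans; [apply sum1_abs_le with (g := fun _ => / (2 * (INR Mq + 1)))|].
  - intros t Ht. eapply Rle_trans; [apply D_weight_abs_le; lia|].
    apply Rinv_le_contravar; [lra|].
    assert (INR Mq <= INR (Mq - 1 + t)) by (apply le_INR; lia). lra.
  - rewrite sum1_const.
    assert (INR (Q - 1 - Mq) <= INR Mq + 1) by (rewrite <- S_INR; apply le_INR; lia).
    pose proof (pos_INR (Q - 1 - Mq)).
    apply Rmult_le_reg_r with (2 * (INR Mq + 1)); [lra|].
    rewrite Rmult_assoc, Rinv_l by lra. lra.
Qed.

Lemma harmonic_frac_sum_truncate :
  Rabs (sum1 (fun k => (frac (beta * INR k) - / 2) / INR k) (Q - 1)
        - sum1 w (Mq - 1)) <= 1.
Proof.
  destruct Mq_bounds as [HM1 HM2].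
  replace (Q - 1)%nat with (S (Q - 2)) by lia.
  rewrite (sum1_summation_by_parts (fun s => frac (beta * INR s) - / 2)).
  fold (D (S (Q - 2)) beta).
  change (fun t => sum1 (fun s => frac (beta * INR s) - / 2) t / (INR t * INR (t + 1)))
    with w.
  assert (Hsplit : sum1 w (Q - 2)
                   = sum1 w (Mq - 1) + sum1 (fun t => w (Mq - 1 + t)%nat) (Q - 1 - Mq)).
  { rewrite <- sum1_split. f_equal. lia. }
  rewrite Hsplit.
  replace (D (S (Q - 2)) beta / INR (S (Q - 2)) + (sum1 w (Mq - 1)
             + sum1 (fun t => w (Mq - 1 + t)%nat) (Q - 1 - Mq)) - sum1 w (Mq - 1))
    with (D (S (Q - 2)) beta / INR (S (Q - 2)) + sum1 (fun t => w (Mq - 1 + t)%nat) (Q - 1 - Mq))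
    by ring.
  eapply Rle_trans; [apply Rabs_triang|].
  assert (Rabs (D (S (Q - 2)) beta / INR (S (Q - 2))) <= / 2).
  { pose proof (D_abs_le (S (Q - 2)) beta).
    assert (0 < INR (S (Q - 2))) by (apply lt_0_INR; lia).
    unfold Rdiv. rewrite Rabs_mult, Rabs_inv, (Rabs_pos_eq (INR _)) by lra.
    apply Rmult_le_reg_r with (INR (S (Q - 2))); [lra|].
    rewrite Rmult_assoc, Rinv_l by lra. lra. }
  pose proof tail_bound. lra.
Qed.

End Truncation.

Section SineSums.
Variable Q : nat.
Hypothesis Q_ge3 : (3 <= Q)%nat.
Local Notation yk k := (PI * INR k / INR Q).

Let Q_ge3R : 3 <= INR Q.
Proof. replace 3 with (INR 3) by (simpl; lra). apply le_INR. exact Q_ge3. Qed.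

Let yk_compl k : (k <= Q)%nat -> yk (Q - k) = PI - yk k.
Proof. intros Hk. rewrite minus_INR by exact Hk. field. lra. Qed.

Let sin_yk_lower_half k : (1 <= k)%nat -> (2 * k <= Q)%nat ->
  PI / INR Q <= 3 / INR k * sin (yk k).
Proof.
  intros Hk1 Hk2. pose proof PI_bounds. pose proof (INR_ge1 k Hk1).
  assert (2 * INR k <= INR Q) by (rewrite <- (mult_INR 2); apply le_INR; exact Hk2).
  assert (Hy : 0 <= yk k <= 2).
  { split; [apply Rmult_le_pos; [nra | left; apply Rinv_0_lt_compat; lra]|].
    apply Rmult_le_reg_r with (INR Q); [lra|].
    replace (PI * INR k / INR Q * INR Q) with (PI * INR k) by (field; lra). nra. }
  pose proof (sin_ge_third (yk k) Hy).
  replace (PI / INR Q) with (3 / INR k * (yk k / 3)) by (field; lra).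
  apply Rmult_le_compat_l; [left; apply Rdiv_lt_0_compat; lra | lra].
Qed.

Lemma sin_yk_lower k : (1 <= k <= Q - 1)%nat ->
  PI / INR Q <= 3 * (1 / INR k + 1 / INR (Q - k)) * sin (yk k).
Proof.
  intros Hk. pose proof (INR_ge1 k ltac:(lia)). pose proof (INR_ge1 (Q - k) ltac:(lia)).
  assert (0 < sin (yk k)) by (apply sin_gt_0; apply pi_mul_div_range; exact Hk).
  assert (0 < 1 / INR k) by (apply Rdiv_lt_0_compat; lra).
  assert (0 < 1 / INR (Q - k)) by (apply Rdiv_lt_0_compat; lra).
  destruct (Nat.le_gt_cases (2 * k) Q).
  - pose proof (sin_yk_lower_half k ltac:(lia) ltac:(lia)). unfold Rdiv in *. nra.
  - pose proof (sin_yk_lower_half (Q - k) ltac:(lia) ltac:(lia)) as Hlow.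
    rewrite yk_compl, sin_PI_x in Hlow by lia. unfold Rdiv in *. nra.
Qed.

Let pi_div_Q_range : 0 < PI / INR Q <= 3 / 2.
Proof.
  pose proof PI_bounds. split; [apply Rdiv_lt_0_compat; lra|].
  apply Rmult_le_reg_r with (INR Q); [lra|].
  replace (PI / INR Q * INR Q) with PI by (field; lra). lra.
Qed.

Lemma ln_sin_ratio_yk_approx k h : (1 <= k <= Q - 1)%nat ->
  - (PI / INR Q) <= h <= 0 -> yk k / 2 <= yk k + h ->
  Rabs (ln (sin (yk k + h) / sin (yk k)) - h * (cos (yk k) / sin (yk k)))
  <= 72 * (/ (INR k * INR k) + / (INR (Q - k) * INR (Q - k))) + 40 * (PI / INR Q)^2.
Proof.
  intros Hk Hh Hhalf.
  pose proof (INR_ge1 k ltac:(lia)). pose proof (INR_ge1 (Q - k) ltac:(lia)).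
  set (B := 3 * (1 / INR k + 1 / INR (Q - k))).
  assert (HB : 0 <= B <= 6).
  { assert (1 / INR k <= 1 /\ 1 / INR (Q - k) <= 1) as [? ?].
    { unfold Rdiv; rewrite !Rmult_1_l, <- Rinv_1.
      split; apply Rinv_le_contravar; lra. }
    assert (0 < 1 / INR k /\ 0 < 1 / INR (Q - k)) as [? ?].
    { split; apply Rdiv_lt_0_compat; lra. }
    unfold B. lra. }
  eapply Rle_trans;
    [exact (ln_sin_ratio_approx (yk k) h (PI / INR Q) B (pi_mul_div_range k Q Hk)
              Hh Hhalf ltac:(lra) (sin_yk_lower k Hk) HB)|].
  assert (4 * B^2 <= 72 * (/ (INR k * INR k) + / (INR (Q - k) * INR (Q - k)))); [|lra].
  unfold B.
  replace (/ (INR k * INR k)) with ((1 / INR k)^2) by (field; lra).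
  replace (/ (INR (Q - k) * INR (Q - k))) with ((1 / INR (Q - k))^2) by (field; lra).
  pose proof (pow2_ge_0 (1 / INR k - 1 / INR (Q - k))). nra.
Qed.

Lemma ln_sin_ratio_error_sum_le :
  sum1 (fun k => 72 * (/ (INR k * INR k) + / (INR (Q - k) * INR (Q - k)))
                 + 40 * (PI / INR Q)^2) (Q - 1) <= 600.
Proof.
  pose proof PI_bounds.
  rewrite sum1_add, sum1_const, sum1_scal, sum1_add.
  rewrite (sum1_compl (fun k => / (INR k * INR k))).
  pose proof (sum_inv_sq_le (Q - 1)).
  assert (0 < 2 / (INR (Q - 1) + 1))
    by (apply Rdiv_lt_0_compat; pose proof (pos_INR (Q - 1)); lra).
  assert (INR (Q - 1) * (40 * (PI / INR Q) ^ 2) <= 214); [|lra].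
  rewrite minus_INR by lia. simpl INR.
  replace ((INR Q - 1) * (40 * (PI / INR Q) ^ 2))
    with (40 * PI^2 * ((INR Q - 1) / (INR Q * INR Q))) by (field; lra).
  assert ((INR Q - 1) / (INR Q * INR Q) <= 1 / 3).
  { apply Rmult_le_reg_r with (INR Q * INR Q); [nra|].
    replace ((INR Q - 1) / (INR Q * INR Q) * (INR Q * INR Q)) with (INR Q - 1)
      by (field; lra).
    nra. }
  assert (0 <= (INR Q - 1) / (INR Q * INR Q))
    by (apply Rmult_le_pos; [lra | left; apply Rinv_0_lt_compat; nra]).
  assert (PI^2 <= 16) by nra. nra.
Qed.

Lemma sum_ln_sin_ratio_approx (h : nat -> R) :
  (forall k, (1 <= k <= Q - 1)%nat -> - (PI / INR Q) <= h k <= 0 /\ yk k / 2 <= yk k + h k) ->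
  Rabs (sum1 (fun k => ln (sin (yk k + h k) / sin (yk k))) (Q - 1)
        - sum1 (fun k => h k * (cos (yk k) / sin (yk k))) (Q - 1)) <= 600.
Proof.
  intros Hh. rewrite <- sum1_sub.
  eapply Rle_trans; [apply sum1_abs_le | apply ln_sin_ratio_error_sum_le].
  intros k Hk. destruct (Hh k Hk). apply ln_sin_ratio_yk_approx; assumption.
Qed.

Lemma sum_cot_approx (w : nat -> R) :
  (forall k, (1 <= k <= Q - 1)%nat -> 0 <= w k <= 1) ->
  Rabs (sum1 (fun k => w k * (PI / INR Q * (cos (yk k) / sin (yk k))
                               - (1 / INR k - 1 / INR (Q - k)))) (Q - 1)) <= 2 * PI.
Proof.
  intros Hw. pose proof PI_bounds.
  eapply Rle_trans; [apply sum1_abs_le with (g := fun _ => 2 * PI / INR Q)|].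
  - intros k Hk. pose proof (pi_mul_div_range k Q Hk) as Hy.
    pose proof (INR_ge1 k ltac:(lia)). pose proof (INR_ge1 (Q - k) ltac:(lia)).
    assert (Hpoles : 1 / INR k - 1 / INR (Q - k) = PI / INR Q * (1 / yk k - 1 / (PI - yk k))).
    { rewrite <- yk_compl by lia. field. repeat split; lra. }
    rewrite Hpoles, <- Rmult_minus_distr_l, Rabs_mult, Rabs_mult.
    rewrite (Rabs_pos_eq (w k)) by (apply Hw; exact Hk).
    rewrite (Rabs_pos_eq (PI / INR Q)) by lra.
    pose proof (cot_approx (yk k) Hy). pose proof (Hw k Hk).
    pose proof (Rabs_pos (cos (yk k) / sin (yk k) - (1 / yk k - 1 / (PI - yk k)))).
    replace (2 * PI / INR Q) with (1 * (PI / INR Q * 2)) by (field; lra).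
    apply Rmult_le_compat; nra.
  - rewrite sum1_const, minus_INR by lia. simpl INR.
    replace ((INR Q - 1) * (2 * PI / INR Q)) with (2 * PI - 2 * (PI / INR Q)) by (field; lra).
    lra.
Qed.

End SineSums.

Lemma sum1_antisym_weights (u : nat -> R) Q :
  (forall k, (1 <= k <= Q - 1)%nat -> u (Q - k)%nat = 1 - u k) ->
  sum1 (fun k => u k * (1 / INR k - 1 / INR (Q - k))) (Q - 1)
  = 2 * sum1 (fun k => (u k - / 2) / INR k) (Q - 1).
Proof.
  intros Hu.
  assert (Hrev : sum1 (fun k => u k / INR (Q - k)) (Q - 1)
                 = sum1 (fun k => (1 - u k) / INR k) (Q - 1)).
  { rewrite <- (sum1_compl (fun k => (1 - u k) / INR k)). apply sum1_ext. intros k Hk.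
    rewrite Hu by lia. f_equal. ring. }
  rewrite (sum1_ext _ (fun k => u k / INR k - u k / INR (Q - k))) by (intros; unfold Rdiv; ring).
  rewrite sum1_sub, Hrev, <- sum1_sub, <- sum1_scal.
  apply sum1_ext. intros k Hk. pose proof (INR_ge1 k ltac:(lia)). field. lra.
Qed.

(** * The product at a convergent denominator *)

Section Convergent.
Variables (alpha : R) (n : nat).
Hypothesis alpha_unit : 0 < alpha < 1.
Hypothesis alpha_irr : irrational alpha.
Hypothesis n_ge4 : (4 <= n)%nat.

Let j := (n - 1)%nat.
Let Q := q alpha n.
Let Q' := q alpha j.
Let Pn := p alpha n.
Let Pn' := p alpha j.
Let y := gx alpha j.
Let cn := c alpha n.
Let beta := alpha_minus alpha n.
Let e := (Z.of_nat Q * Z.of_nat Pn' - Z.of_nat Pn * Z.of_nat Q')%Z.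

Let n_eq : n = S j.
Proof. unfold j; lia. Qed.

Let x_unit i : 0 < gx alpha i < 1.
Proof. exact (gauss_iter_in_unit alpha alpha_unit alpha_irr i). Qed.

Let a_pos i : (1 <= a alpha (S i))%nat.
Proof. exact (proj2 (gauss_step alpha i (x_unit i))). Qed.

Lemma q_bounds : (1 <= Q' < Q)%nat /\ (3 <= Q)%nat.
Proof.
  unfold Q, Q', j. destruct n as [|[|[|[|m]]]]; try lia.
  replace (S (S (S (S m))) - 1)%nat with (S (S (S m))) by lia.
  rewrite (q_rec alpha (S (S m))), (q_rec alpha (S m)).
  pose proof (q_pos alpha (S m) (fun i _ => a_pos i)).
  pose proof (q_pos alpha m (fun i _ => a_pos i)).
  pose proof (a_pos (S (S m))). pose proof (a_pos (S m)). nia.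
Qed.

Let Q_real : 3 <= INR Q /\ 1 <= INR Q' /\ INR Q' + 1 <= INR Q.
Proof.
  destruct q_bounds as [HQ' HQ].
  split; [|split]; [replace 3 with (INR 3) by (simpl; lra); apply le_INR; lia
                   | apply INR_ge1; lia | rewrite <- S_INR; apply le_INR; lia].
Qed.

Lemma det_unit : e = 1%Z \/ e = (-1)%Z.
Proof. unfold e, Q, Pn, Q', Pn'. rewrite n_eq. apply q_p_det. Qed.

Lemma c_bounds : 0 < cn < 1 /\ cn * (INR Q' / INR Q) <= 1 / 2.
Proof.
  destruct Q_real as [H1 [H2 H3]]. pose proof (x_unit j) as Hy.
  assert (inv_y_gt1 : 1 < / gx alpha j) by (rewrite <- Rinv_1; apply Rinv_lt_contravar; lra).
  assert (Hb : 0 < INR Q' / INR Q <= 1).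
  { split; [apply Rdiv_lt_0_compat; lra|].
    apply Rmult_le_reg_r with (INR Q); [lra|]. unfold Rdiv. rewrite Rmult_assoc, Rinv_l; lra. }
  unfold cn, c, alpha_plus, alpha_minus. fold j Q Q'.
  set (b := INR Q' / INR Q) in *. set (iy := / gx alpha j) in *. clearbody b iy.
  split; [split|].
  - apply Rinv_0_lt_compat; lra.
  - rewrite <- Rinv_1. apply Rinv_lt_contravar; lra.
  - apply Rmult_le_reg_r with (iy + b); [lra|].
    replace (/ (iy + b) * b * (iy + b)) with b by (field; lra). lra.
Qed.

Lemma alpha_mul_q : alpha * INR Q = INR Pn + IZR e * cn / INR Q.
Proof.
  pose proof (alpha_convergents alpha j (fun i _ => x_unit i)) as F.
  rewrite <- n_eq in F. fold Q Q' Pn Pn' y in F.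
  assert (He : IZR e = INR Q * INR Pn' - INR Pn * INR Q').
  { unfold e. rewrite minus_IZR, !mult_IZR, <- !INR_IZR_INZ. reflexivity. }
  destruct Q_real as [H1 [H2 H3]]. pose proof (x_unit j) as Hy. fold y in Hy.
  assert (Hd : 0 < INR Q + INR Q' * y) by nra.
  assert (Halpha : alpha = (INR Pn + INR Pn' * y) / (INR Q + INR Q' * y)).
  { apply Rmult_eq_reg_r with (INR Q + INR Q' * y); [rewrite F; field|]; lra. }
  rewrite He, Halpha. unfold cn, c, alpha_plus, alpha_minus. fold j Q Q' y.
  field. repeat split; lra.
Qed.

Local Notation r k := (mulmod Q Q' k).
Local Notation u k := (INR (mulmod Q Q' k) / INR Q).
Local Notation yk k := (PI * INR k / INR Q).
Local Notation hk k := (- (PI * (cn * u k) / INR Q)).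

Let Q'_range : (1 <= Q' < Q)%nat.
Proof. apply q_bounds. Qed.

Let e_sign : IZR e = 1 \/ IZR e = -1.
Proof. destruct det_unit as [-> | ->]; [left | right]; reflexivity. Qed.

Lemma u_range k : (1 <= k <= Q - 1)%nat -> 0 < u k < 1.
Proof.
  intros Hk. pose proof (mulmod_range Q Q' Q'_range Pn Pn' det_unit k Hk).
  destruct Q_real as [H1 _].
  assert (1 <= INR (r k)) by (apply INR_ge1; lia).
  assert (INR (r k) + 1 <= INR Q) by (rewrite <- S_INR; apply le_INR; lia).
  split; [apply Rdiv_lt_0_compat; lra|].
  apply Rmult_lt_reg_r with (INR Q); [lra|].
  replace (INR (r k) / INR Q * INR Q) with (INR (r k)) by (field; lra). lra.
Qed.

Lemma u_compl k : (1 <= k <= Q - 1)%nat -> u (Q - k)%nat = 1 - u k.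
Proof.
  intros Hk. rewrite (mulmod_compl Q Q' Q'_range Pn Pn' det_unit k Hk).
  pose proof (mulmod_range Q Q' Q'_range Pn Pn' det_unit k Hk).
  destruct Q_real as [H1 _]. rewrite minus_INR by lia. field. lra.
Qed.

Lemma u_eq_frac k : u k = frac (beta * INR k).
Proof.
  destruct Q_real as [H1 _].
  replace (beta * INR k) with (INR (k * Q') / INR Q)
    by (unfold beta, alpha_minus; fold j Q Q'; rewrite mult_INR; field; lra).
  rewrite frac_div_nat by lia. reflexivity.
Qed.

Lemma c_mul_u_le k : (1 <= k <= Q - 1)%nat -> cn * u k <= INR k / 2.
Proof.
  intros Hk. destruct c_bounds as [[Hc1 Hc2] Hc3]. pose proof (u_range k Hk).
  destruct (Nat.eq_dec k 1) as [->|Hk1].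
  - rewrite (mulmod_1 Q Q' Q'_range). simpl INR. lra.
  - assert (2 <= INR k) by (replace 2 with (INR 2) by (simpl; lra); apply le_INR; lia).
    nra.
Qed.

Lemma hk_bounds k : (1 <= k <= Q - 1)%nat ->
  - (PI / INR Q) <= hk k <= 0 /\ yk k / 2 <= yk k + hk k.
Proof.
  intros Hk. pose proof (u_range k Hk). pose proof (c_mul_u_le k Hk).
  destruct c_bounds as [[Hc1 Hc2] _]. destruct Q_real as [H1 _]. pose proof PI_bounds.
  assert (HPQ : 0 < PI / INR Q) by (apply Rdiv_lt_0_compat; lra).
  replace (PI * INR k / INR Q) with (PI / INR Q * INR k) by (field; lra).
  replace (PI * (cn * u k) / INR Q) with (PI / INR Q * (cn * u k)) by (field; lra).
  assert (0 <= cn * u k <= 1) by (split; nra).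
  split; [split|]; nra.
Qed.

Lemma abs_sin_mulmod k : (1 <= k <= Q - 1)%nat ->
  Rabs (2 * sin (PI * INR (r k) * alpha)) = 2 * sin (yk k + hk k).
Proof.
  intros Hk. destruct (mulmod_mul_num Q Q' Q'_range Pn Pn' k) as [m Hm]. fold e in Hm.
  assert (HmR : INR (r k) * INR Pn = INR Q * IZR m - IZR e * INR k).
  { rewrite !INR_IZR_INZ, <- !mult_IZR, <- minus_IZR. f_equal. exact Hm. }
  destruct Q_real as [H1 _].
  assert (Harg : PI * INR (r k) * alpha = (- IZR e) * (yk k + hk k) + IZR m * PI).
  { replace alpha with ((INR Pn + IZR e * cn / INR Q) / INR Q)
      by (rewrite <- alpha_mul_q; field; lra).
    replace (PI * INR (r k) * ((INR Pn + IZR e * cn / INR Q) / INR Q))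
      with (PI / INR Q * (INR (r k) * INR Pn) + IZR e * (PI * (cn * u k) / INR Q))
      by (field; lra).
    rewrite HmR. field. lra. }
  destruct (hk_bounds k Hk) as [Hh Hhalf].
  pose proof (pi_mul_div_range k Q Hk).
  assert (0 < sin (yk k + hk k)) by (apply sin_gt_0; lra).
  rewrite Harg, Rabs_mult, abs_sin_add_int_mul_PI, (Rabs_pos_eq 2) by lra.
  rewrite abs_sin_sign_mul by (destruct e_sign; [right|left]; lra).
  rewrite Rabs_pos_eq; lra.
Qed.

Let c_angle_range : 0 < PI * cn / INR Q <= 2.
Proof.
  destruct Q_real as [H1 _]. destruct c_bounds as [[Hc1 Hc2] _]. pose proof PI_bounds.
  split; [apply Rdiv_lt_0_compat; nra|].
  apply Rmult_le_reg_r with (INR Q); [lra|].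
  replace (PI * cn / INR Q * INR Q) with (PI * cn) by (field; lra). nra.
Qed.

Let sin_c_angle_pos : 0 < sin (PI * cn / INR Q).
Proof. pose proof PI_bounds. apply sin_gt_0; lra. Qed.

Lemma abs_sin_q : Rabs (2 * sin (PI * INR Q * alpha)) = 2 * sin (PI * cn / INR Q).
Proof.
  destruct Q_real as [H1 _].
  assert (Harg : PI * INR Q * alpha = IZR e * (PI * cn / INR Q) + IZR (Z.of_nat Pn) * PI).
  { rewrite Rmult_assoc, (Rmult_comm (INR Q)), alpha_mul_q, <- INR_IZR_INZ. field. lra. }
  rewrite Harg, Rabs_mult, abs_sin_add_int_mul_PI, (Rabs_pos_eq 2) by lra.
  rewrite abs_sin_sign_mul by exact e_sign.
  rewrite Rabs_pos_eq; lra.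
Qed.

Lemma P_q_factor :
  P Q alpha = prod1 (fun k => 2 * sin (yk k + hk k)) (Q - 1) * (2 * sin (PI * cn / INR Q)).
Proof.
  destruct q_bounds as [_ HQ].
  unfold P. replace Q with (S (Q - 1)) at 1 by lia. cbn [prod1].
  replace (S (Q - 1)) with Q by lia. rewrite abs_sin_q. f_equal.
  rewrite <- (prod1_reindex (fun k => r k) (Q - 1)
                (mulmod_range Q Q' Q'_range Pn Pn' det_unit)
                (mulmod_inj Q Q' Q'_range Pn Pn' det_unit)).
  apply prod1_ext. intros k Hk. apply abs_sin_mulmod. exact Hk.
Qed.

Lemma ln_P_q : ln (P Q alpha) = ln (INR Q) + ln (2 * sin (PI * cn / INR Q)) +
  sum1 (fun k => ln (sin (yk k + hk k) / sin (yk k))) (Q - 1).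
Proof.
  destruct q_bounds as [_ HQ].
  assert (Hsin : forall k, (1 <= k <= Q - 1)%nat -> 0 < sin (yk k) /\ 0 < sin (yk k + hk k)).
  { intros k Hk. pose proof (pi_mul_div_range k Q Hk). pose proof (hk_bounds k Hk).
    split; apply sin_gt_0; lra. }
  rewrite P_q_factor, ln_mult by (try apply prod1_pos; intros; try pose proof (Hsin k H); lra).
  rewrite ln_prod1 by (intros k Hk; pose proof (Hsin k Hk); lra).
  rewrite (sum1_ext _ (fun k => ln (2 * sin (yk k)) + ln (sin (yk k + hk k) / sin (yk k)))).
  2:{ intros k Hk. pose proof (Hsin k Hk) as [Hs1 Hs2].
      rewrite <- ln_mult by (try apply Rdiv_lt_0_compat; lra). f_equal. field. lra. }
  rewrite sum1_add, <- ln_prod1 by (intros k Hk; pose proof (Hsin k Hk); lra).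
  rewrite RootsOfUnity.prod1_two_sin_pi_div by lia. ring.
Qed.

Let Dsum := sum1 (fun t => D t beta / (INR t * INR (t + 1))) (M alpha n - 1).

Lemma theta_expr_eq : theta_expr alpha n = cn * exp (- (2 * cn * Dsum)).
Proof. unfold theta_expr. fold cn beta Dsum. do 2 f_equal. ring. Qed.

Lemma sum_cot_Dsum_approx :
  Rabs (sum1 (fun k => hk k * (cos (yk k) / sin (yk k))) (Q - 1) + 2 * cn * Dsum) <= 10.
Proof.
  destruct q_bounds as [_ HQ]. destruct Q_real as [H1 _].
  destruct c_bounds as [[Hc1 Hc2] _]. pose proof PI_bounds.
  set (A := sum1 (fun k => hk k * (cos (yk k) / sin (yk k))) (Q - 1)).
  set (U := sum1 (fun k => u k * (1 / INR k - 1 / INR (Q - k))) (Q - 1)).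
  set (G := sum1 (fun k => (frac (beta * INR k) - / 2) / INR k) (Q - 1)).
  assert (Hcot : Rabs (- A - cn * U) <= 2 * PI).
  { eapply Rle_trans; [|apply (sum_cot_approx Q HQ (fun k => cn * u k))].
    - right. f_equal. unfold A, U. rewrite <- sum1_scal, <- sum1_opp, <- sum1_sub.
      apply sum1_ext. intros k Hk. pose proof (INR_ge1 k ltac:(lia)).
      pose proof (INR_ge1 (Q - k) ltac:(lia)). pose proof (pi_mul_div_range k Q Hk).
      assert (sin (PI * INR k / INR Q) <> 0) by (apply Rgt_not_eq, sin_gt_0; lra).
      field. lra.
    - intros k Hk. pose proof (u_range k Hk). split; nra. }
  assert (HUG : U = 2 * G).
  { unfold U, G. rewrite (sum1_antisym_weights (fun k => u k) Q u_compl).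
    f_equal. apply sum1_ext. intros k _. now rewrite u_eq_frac. }
  assert (Htrunc : Rabs (G - Dsum) <= 1) by exact (harmonic_frac_sum_truncate beta Q HQ).
  apply Rabs_le_inv in Hcot. apply Rabs_le_inv in Htrunc. rewrite HUG in Hcot.
  assert (- cn <= cn * (G - Dsum) <= cn) by (split; nra).
  apply Rabs_le. split; nra.
Qed.

Lemma ln_q_sin_c_bounds : 1 / 2 <= ln (INR Q) + ln (2 * sin (PI * cn / INR Q)) - ln cn <= 7.
Proof.
  destruct Q_real as [H1 _]. destruct c_bounds as [[Hc1 Hc2] _]. pose proof PI_bounds.
  set (t := PI * cn / INR Q) in *.
  assert (Hs1 : t / 3 <= sin t) by (apply sin_ge_third; lra).
  assert (Hs2 : sin t <= t) by (apply sin_le_id; lra).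
  assert (HQt : INR Q * t = PI * cn) by (unfold t; field; lra).
  set (w := INR Q * (2 * sin t) / cn).
  assert (Hw : 2 <= w <= 8).
  { unfold w. split; apply Rmult_le_reg_r with cn; try lra;
      replace (INR Q * (2 * sin t) / cn * cn) with (INR Q * (2 * sin t)) by (field; lra); nra. }
  replace (ln (INR Q) + ln (2 * sin t) - ln cn) with (ln w).
  - destruct (ln_bounds w ltac:(lra)) as [Hl1 Hl2].
    assert (/ w <= 1 / 2) by (apply Rmult_le_reg_r with w; [lra | rewrite Rinv_l; lra]).
    lra.
  - unfold w, Rdiv. rewrite !ln_mult, ln_Rinv; try ring; try lra;
      try apply Rmult_lt_0_compat; try apply Rinv_0_lt_compat; lra.
Qed.

Lemma P_q_pos : 0 < P Q alpha.
Proof.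
  rewrite P_q_factor. apply Rmult_lt_0_compat; [|lra].
  apply prod1_pos. intros k Hk. pose proof (pi_mul_div_range k Q Hk). pose proof (hk_bounds k Hk).
  assert (0 < sin (yk k + hk k)) by (apply sin_gt_0; lra). lra.
Qed.

Lemma theta_expr_pos : 0 < theta_expr alpha n.
Proof.
  rewrite theta_expr_eq. destruct c_bounds as [[Hc1 _] _].
  apply Rmult_lt_0_compat; [lra | apply exp_pos].
Qed.

Lemma ln_P_q_theta_approx : Rabs (ln (P Q alpha) - ln (theta_expr alpha n)) <= 617.
Proof.
  destruct q_bounds as [_ HQ]. destruct c_bounds as [[Hc1 _] _].
  rewrite theta_expr_eq, ln_mult, ln_exp, ln_P_q by (try apply exp_pos; lra).
  pose proof ln_q_sin_c_bounds.
  pose proof (sum_ln_sin_ratio_approx Q HQ (fun k => hk k) hk_bounds) as Hratio.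
  pose proof sum_cot_Dsum_approx as Hcot.
  apply Rabs_le_inv in Hratio. apply Rabs_le_inv in Hcot.
  apply Rabs_le. split; lra.
Qed.

End Convergent.

Theorem theorem1p1 (alpha : R) :
  0 < alpha < 1 -> irrational alpha ->
  exists cc CC : R, 0 < cc /\ cc <= CC /\
    exists N0 : nat, forall n : nat, (N0 <= n)%nat ->
      cc * theta_expr alpha n <= P (q alpha n) alpha <= CC * theta_expr alpha n.
Proof.
  intros alpha_unit alpha_irr.
  exists (exp (-617)), (exp 617).
  split; [apply exp_pos|]. split; [left; apply exp_increasing; lra|].
  exists 4%nat. intros n n_ge4.
  pose proof (ln_P_q_theta_approx alpha n alpha_unit alpha_irr n_ge4) as Hln.
  pose proof (P_q_pos alpha n alpha_unit alpha_irr n_ge4) as HP.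
  pose proof (theta_expr_pos alpha n alpha_unit alpha_irr n_ge4) as Htheta.
  apply Rabs_le_inv in Hln.
  rewrite <- (exp_ln _ HP), <- (exp_ln _ Htheta), <- !exp_plus.
  split; apply exp_le_compat; lra.
Qed.
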